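(* Let $v$ be a vertex of $K$ and let $P$ and $Q$ be chain-connected finite subcomplexes of $K$ containing $v$. If there is a cell-preserving isomorphism $\phi:P\to Q$ with $\phi(v)=v$, then $P=Q$.
   Context: $K$ is the decorated combinatorial tiling: a 2-dimensional CW-complex homeomorphic to the open disk, built as follows. A decorated pentagon has boundary vertices $v_1,\dots,v_5$ in cyclic order (indices mod 5) with corner labels $1,\dots,5$, corner $v_i$ labelled $i$. The rule $\omega$ adds a vertex $m_i$ inside each edge $v_iv_{i+1}$, interior vertices $c_1,\dots,c_5$, edges $c_ic_{i+1}$, $c_im_i$, and replaces the face by the central pentagon $c_1\cdots c_5$ (label $i+1$ at $c_i$) and petals $v_i\,m_i\,c_i\,c_{i-1}\,m_{i-1}$ with labels $i,i+1,i+2,i+3,i+4$ (mod 5) at these corners. $K_0$ is one decorated pentagon, $K_n=\omega^n(K_0)$, $K_n$ embeds label-preservingly onto the central superpentagon $\omega^n(\text{central face of }\omega(K_0))$ of $K_{n+1}$, and $K$ is the direct limit. Cell-preserving isomorphisms are required to preserve the corner labels (decorations). Chain-connected: any two faces are joined by a finite chain of faces of the subcomplex, consecutive ones sharing an edge. *)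

From mathcomp Require Import all_boot.
From Stdlib Require Import Relations List.
Set Implicit Arguments. Unset Strict Implicit. Unset Printing Implicit Defensive.

(** Corner labels 1..5 of the paper are encoded as [j : 'I_5]
  (paper label = j+1); arithmetic on labels is mod 5 ([ordS], [ord_pred]).
  Every face is an oriented pentagon whose corner with label j is
  [lcor f j]; its edge with label j joins corner j to corner j+1 and is
  [lfe f j] = (e, o), where o = true iff the (canonically oriented) edge e
  is traversed from its source to its target.

  Level n (the complex K_n = omega^n(K_0)) is described by three finite
  types of cells:
   - K_0 : vertices v_j, edges v_j v_{j+1}, one face;
   - K_{n+1} = omega(K_n):
       vertices  = old vertices v  +  midpoints  Mid e  +  centres  Cen f i
       edges     = halves (e, b)   +  c_i c_{i+1} (f,i) +  c_i m_i (f,i)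
       faces     = (f, None) (central pentagon) + (f, Some i) (petal at v_i). *)

Fixpoint lvl (n : nat) : finType * finType * finType :=
  match n with
  | 0 => ('I_5 : finType, 'I_5 : finType, unit : finType)
  | m.+1 =>
    (((lvl m).1.1 + (lvl m).1.2 + ((lvl m).2 * 'I_5))%type : finType,
     (((lvl m).1.2 * bool) + ((lvl m).2 * 'I_5) + ((lvl m).2 * 'I_5))%type
       : finType,
     ((lvl m).2 * option 'I_5)%type : finType)
  end.

Definition VT n : finType := (lvl n).1.1.
Definition ET n : finType := (lvl n).1.2.
Definition FT n : finType := (lvl n).2.

Definition Vold m (v : VT m) : VT m.+1 := inl (inl v).
Definition Vmid m (e : ET m) : VT m.+1 := inl (inr e).
Definition Vcen m (f : FT m) (i : 'I_5) : VT m.+1 := inr (f, i).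
(* half of e: b = false is the half at the source of e, b = true at its target *)
Definition Ehalf m (e : ET m) (b : bool) : ET m.+1 := inl (inl (e, b)).
(* edge c_i c_{i+1} of the subdivision of f (oriented c_i -> c_{i+1}) *)
Definition Ecc m (f : FT m) (i : 'I_5) : ET m.+1 := inl (inr (f, i)).
(* edge c_i m_i of the subdivision of f (oriented c_i -> m_i) *)
Definition Ecm m (f : FT m) (i : 'I_5) : ET m.+1 := inr (f, i).
Definition Fcen m (f : FT m) : FT m.+1 := (f, None).
Definition Fpet m (f : FT m) (i : 'I_5) : FT m.+1 := (f, Some i).

Definition off5 (j i : 'I_5) : nat := (j + 5 - i) %% 5.

Record lstr (n : nat) := LStr {
  lsrc : ET n -> VT n;
  ltgt : ET n -> VT n;
  lcor : FT n -> 'I_5 -> VT n;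
  lfe  : FT n -> 'I_5 -> ET n * bool }.

Fixpoint str (n : nat) : lstr n :=
  match n return lstr n with
  | 0 => @LStr 0 (fun e : 'I_5 => e) (fun e : 'I_5 => ordS e)
                 (fun _ (j : 'I_5) => j) (fun _ (j : 'I_5) => (j, true))
  | m.+1 =>
    let s := str m in
    @LStr m.+1
      (fun x : ET m.+1 =>
         match x with
         | inl (inl (e, b)) => if b then Vmid e else Vold (lsrc s e)
         | inl (inr (f, i)) => Vcen f i
         | inr (f, i) => Vcen f i
         end)
      (fun x : ET m.+1 =>
         match x with
         | inl (inl (e, b)) => if b then Vold (ltgt s e) else Vmid e
         | inl (inr (f, i)) => Vcen f (ordS i)
         | inr (f, i) => Vmid (lfe s f i).1
         end)
      (fun (x : FT m.+1) (j : 'I_5) =>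
         match x with
         | (f, None) => Vcen f (ord_pred j)
         | (f, Some i) =>
           match off5 j i with
           | 0 => Vold (lcor s f i)
           | 1 => Vmid (lfe s f i).1
           | 2 => Vcen f i
           | 3 => Vcen f (ord_pred i)
           | _ => Vmid (lfe s f (ord_pred i)).1
           end
         end)
      (fun (x : FT m.+1) (j : 'I_5) =>
         match x with
         | (f, None) => (Ecc f (ord_pred j), true)
         | (f, Some i) =>
           let (e1, o1) := lfe s f i in
           let (e0, o0) := lfe s f (ord_pred i) in
           match off5 j i with
           | 0 => if o1 then (Ehalf e1 false, true) else (Ehalf e1 true, false)
           | 1 => (Ecm f i, false)
           | 2 => (Ecc f (ord_pred i), false)
           | 3 => (Ecm f (ord_pred i), true)
           | _ => if o0 then (Ehalf e0 true, true) else (Ehalf e0 false, false)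
           end
         end)
  end.

(** The label-preserving embedding K_n -> K_{n+1} onto the central
    superpentagon omega^n(central face of omega(K_0)); it is omega^n of the
    embedding of K_0 onto the central face (v_j |-> c_{j-1}). *)
Record lemb (n : nat) := LEmb {
  eV : VT n -> VT n.+1;
  eE : ET n -> ET n.+1;
  eF : FT n -> FT n.+1 }.

Fixpoint emb (n : nat) : lemb n :=
  match n return lemb n with
  | 0 => @LEmb 0 (fun i : 'I_5 => @Vcen 0 tt (ord_pred i))
                 (fun i : 'I_5 => @Ecc 0 tt (ord_pred i))
                 (fun _ => @Fcen 0 tt)
  | m.+1 =>
    let k := emb m in
    @LEmb m.+1
      (fun x : VT m.+1 =>
         match x with
         | inl (inl v) => Vold (eV k v)
         | inl (inr e) => Vmid (eE k e)
         | inr (f, i) => Vcen (eF k f) i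
         end)
      (fun x : ET m.+1 =>
         match x with
         | inl (inl (e, b)) => Ehalf (eE k e) b
         | inl (inr (f, i)) => Ecc (eF k f) i
         | inr (f, i) => Ecm (eF k f) i
         end)
      (fun x : FT m.+1 => let (f, o) := x in (eF k f, o))
  end.

(** * The direct limit K.  A cell of K is represented by its unique
    representative of minimal level: a pair (n, x) with x a cell of K_n
    which is not in the image of K_{n-1} (when n > 0). *)

Definition canon (T : nat -> finType) (e : forall m, T m -> T m.+1)
  (p : {k : nat & T k}) : bool :=
  let (k, x) := p in
  match k return T k -> bool with
  | 0 => fun _ => true
  | m.+1 => fun x => x \notin codom (e m)
  end x.

Fixpoint norm (T : nat -> finType) (e : forall m, T m -> T m.+1)
  (n : nat) : T n -> {k : nat & T k} :=
  match n return T n -> {k : nat & T k} with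
  | 0 => fun x => existT T 0 x
  | m.+1 => fun x =>
     match [pick y | e m y == x] with
     | Some y => norm e y
     | None => existT T m.+1 x
     end
  end.

Lemma norm_canon (T : nat -> finType) (e : forall m, T m -> T m.+1)
  (n : nat) (x : T n) : canon e (norm e x).
Proof.
elim: n x => [|m IH] x //=.
case: pickP => [y _ | H]; first exact: IH.
rewrite /=; apply/codomP => -[y Hy].
by have := H y; rewrite Hy eqxx.
Qed.

Definition eVs m := eV (emb m).
Definition eEs m := eE (emb m).
Definition eFs m := eF (emb m).

Definition Kvert := {p : {k : nat & VT k} | canon eVs p}.
Definition Kedge := {p : {k : nat & ET k} | canon eEs p}.
Definition Kface := {p : {k : nat & FT k} | canon eFs p}.

Definition toKV n (x : VT n) : Kvert := exist _ (norm eVs x) (norm_canon eVs x).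
Definition toKE n (x : ET n) : Kedge := exist _ (norm eEs x) (norm_canon eEs x).
Definition toKF n (x : FT n) : Kface := exist _ (norm eFs x) (norm_canon eFs x).

Definition Ksrc (e : Kedge) : Kvert :=
  let (k, x) := sval e in toKV (lsrc (str k) x).
Definition Ktgt (e : Kedge) : Kvert :=
  let (k, x) := sval e in toKV (ltgt (str k) x).
Definition Kcorner (f : Kface) (j : 'I_5) : Kvert :=
  let (k, x) := sval f in toKV (lcor (str k) x j).
Definition Kfedge (f : Kface) (j : 'I_5) : Kedge :=
  let (k, x) := sval f in toKE (lfe (str k) x j).1.

Record cx := Cx {
  cV : Kvert -> Prop;
  cE : Kedge -> Prop;
  cF : Kface -> Prop }.

(* A subcomplex: closed under taking boundaries, and (as for the
   2-dimensional subcomplexes of the paper) the union of its closed faces. *)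
Definition subcomplex (P : cx) : Prop :=
  (forall e, cE P e -> cV P (Ksrc e) /\ cV P (Ktgt e)) /\
  (forall f, cF P f -> forall j, cV P (Kcorner f j) /\ cE P (Kfedge f j)) /\
  (forall x, cV P x -> exists f j, cF P f /\ Kcorner f j = x) /\
  (forall e, cE P e -> exists f j, cF P f /\ Kfedge f j = e).

Definition finite_cx (P : cx) : Prop :=
  (exists s : list Kvert, forall x, cV P x -> List.In x s) /\
  (exists s : list Kedge, forall e, cE P e -> List.In e s) /\
  (exists s : list Kface, forall f, cF P f -> List.In f s).

Definition face_adj (P : cx) (f g : Kface) : Prop :=
  cF P f /\ cF P g /\ exists i j, Kfedge f i = Kfedge g j.

Definition chain_connected (P : cx) : Prop :=
  forall f g, cF P f -> cF P g -> clos_refl_trans Kface (face_adj P) f g.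

Record cmap := CMap {
  mV : Kvert -> Kvert;
  mE : Kedge -> Kedge;
  mF : Kface -> Kface }.

(* phi is a cell-preserving isomorphism P -> Q preserving corner labels:
   a bijection of cells of each dimension, compatible with incidences,
   sending the corner (resp. edge) with label j of a face f to the corner
   (resp. edge) with label j of phi(f). *)
Definition cell_iso (P Q : cx) (phi : cmap) : Prop :=
  (forall x, cV P x -> cV Q (mV phi x)) /\
  (forall e, cE P e -> cE Q (mE phi e)) /\
  (forall f, cF P f -> cF Q (mF phi f)) /\
  (forall x y, cV P x -> cV P y -> mV phi x = mV phi y -> x = y) /\
  (forall e d, cE P e -> cE P d -> mE phi e = mE phi d -> e = d) /\
  (forall f g, cF P f -> cF P g -> mF phi f = mF phi g -> f = g) /\
  (forall y, cV Q y -> exists x, cV P x /\ mV phi x = y) /\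
  (forall d, cE Q d -> exists e, cE P e /\ mE phi e = d) /\
  (forall g, cF Q g -> exists f, cF P f /\ mF phi f = g) /\
  (forall e, cE P e ->
     (mV phi (Ksrc e) = Ksrc (mE phi e) /\ mV phi (Ktgt e) = Ktgt (mE phi e)) \/
     (mV phi (Ksrc e) = Ktgt (mE phi e) /\ mV phi (Ktgt e) = Ksrc (mE phi e))) /\
  (forall f, cF P f -> forall j,
     mV phi (Kcorner f j) = Kcorner (mF phi f) j /\
     mE phi (Kfedge f j) = Kfedge (mF phi f) j).

From mathcomp Require Import all_boot zify.
Set Implicit Arguments. Unset Strict Implicit. Unset Printing Implicit Defensive.

(* In K a face is determined by any one of its labelled corners, and by any
   one of its labelled edges: at each level K_n this is a finite case analysis
   over the subdivision rule, and it passes to the direct limit because the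
   embeddings K_n -> K_(n+1) are injective and respect the labelling.
   Consequently a label-preserving isomorphism fixing a vertex v fixes a face
   at v, and then, face by face along chains, every face of P; so P and Q have
   the same faces, hence the same cells. *)

Section DirectLimit.

Variables (T : nat -> finType) (e : forall m, T m -> T m.+1).

Lemma existT_inj n (x y : T n) : existT T n x = existT T n y -> x = y.
Proof. by move/eqP; rewrite eq_Tagged => /eqP. Qed.

Lemma norm_level n (x : T n) : projT1 (norm e x) <= n.
Proof.
elim: n x => [|m IH] x //=.
by case: pickP => [y _|_] //=; apply: leq_trans (IH y) (leqnSn m).
Qed.

Lemma norm_inj n : injective (@norm T e n).
Proof.
elim: n => [|m IH] x y /=; first exact: existT_inj.
case: pickP => [x' /eqP <-|_]; case: pickP => [y' /eqP <-|_].
- by move/IH ->.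
- by move=> E; have := norm_level x'; rewrite E /= ltnn.
- by move=> E; have := norm_level y'; rewrite -E /= ltnn.
- exact: existT_inj.
Qed.

Lemma norm_canonical n (x : T n) : canon e (existT T n x) -> norm e x = existT T n x.
Proof.
case: n x => [|m] x //= Hx.
by case: pickP => [y /eqP Ey|//]; move: Hx; rewrite -Ey codom_f.
Qed.

Hypothesis e_inj : forall m, injective (@e m).

Lemma norm_emb m (x : T m) : norm e (e x) = norm e x.
Proof.
rewrite /=; case: pickP => [y /eqP/e_inj -> //|Hx].
by have := Hx x; rewrite eqxx.
Qed.

End DirectLimit.

Section DirectLimitMap.

Variables (T U : nat -> finType) (eT : forall m, T m -> T m.+1) (eU : forall m, U m -> U m.+1).
Variable c : forall n, T n -> U n.
Hypotheses (eT_inj : forall m, injective (@eT m)) (eU_inj : forall m, injective (@eU m)).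
Hypotheses (c_inj : forall n, injective (@c n)) (c_emb : forall n (x : T n), c (eT x) = eU (c x)).

(* A compatible family of injections induces an injection of direct limits. *)
Lemma norm_map_inj k l (x : T k) (y : T l) :
  norm eU (c x) = norm eU (c y) -> norm eT x = norm eT y.
Proof.
have same_level n (x' y' : T n) : norm eU (c x') = norm eU (c y') -> x' = y'.
  by move=> /norm_inj/c_inj.
move Hd: ((l - k) + (k - l)) => d; elim: d k l x y Hd => [|d IH] k l x y Hd E.
  have Ekl : k = l by lia.
  by subst l; rewrite (same_level _ _ _ E).
case: (ltngtP k l) => Hkl.
- by rewrite -(norm_emb eT_inj x); apply: IH; [lia | rewrite c_emb (norm_emb eU_inj)].
- by rewrite -(norm_emb eT_inj y); apply: IH; [lia | rewrite c_emb (norm_emb eU_inj)].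
- by subst l; rewrite (same_level _ _ _ E).
Qed.

End DirectLimitMap.

Lemma lcor_central m (f : FT m) j : lcor (str m.+1) (Fcen f) j = Vcen f (ord_pred j).
Proof. by []. Qed.

Lemma lcor_petal m (f : FT m) i j : lcor (str m.+1) (Fpet f i) j =
  match off5 j i with
  | 0 => Vold (lcor (str m) f i)
  | 1 => Vmid (lfe (str m) f i).1
  | 2 => Vcen f i
  | 3 => Vcen f (ord_pred i)
  | _ => Vmid (lfe (str m) f (ord_pred i)).1
  end.
Proof. by []. Qed.

Lemma lfe_central m (f : FT m) j : (lfe (str m.+1) (Fcen f) j).1 = Ecc f (ord_pred j).
Proof. by []. Qed.

Lemma lfe_petal m (f : FT m) i j : (lfe (str m.+1) (Fpet f i) j).1 =
  match off5 j i with
  | 0 => Ehalf (lfe (str m) f i).1 (~~ (lfe (str m) f i).2)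
  | 1 => Ecm f i
  | 2 => Ecc f (ord_pred i)
  | 3 => Ecm f (ord_pred i)
  | _ => Ehalf (lfe (str m) f (ord_pred i)).1 (lfe (str m) f (ord_pred i)).2
  end.
Proof.
rewrite /=; case: (lfe (str m) f i) => e1 o1; case: (lfe (str m) f (ord_pred i)) => e0 o0.
by case: (off5 j i) => [|[|[|[|?]]]] //=; case: o1; case: o0.
Qed.

Ltac label_arith :=
  unfold off5 in *;
  repeat match goal with
  | H : @eq (ordinal 5) _ _ |- _ => move/(congr1 (@nat_of_ord 5)): H => H
  end;
  repeat match goal with
  | i : _ |- _ => lazymatch goal with
      | _ : is_true (@nat_of_ord 5 i < 5) |- _ => fail
      | _ => pose proof (ltn_ord (i : 'I_5)) end
  end;
  simpl in *; lia.

Ltac cell_eq := let H := fresh in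
  move=> H; first [discriminate H | injection H; clear H; intros; subst].

(* The configurations left by [cell_eq] are settled by arithmetic mod 5, or
   by the clash [~~ o = o] of the orientations with which two petals see the
   same half-edge. *)
Ltac solve_labels := first
  [ by []
  | by congr (_, Some _); apply: ord_inj; label_arith
  | by left; split; [congr (_, Some _) | ]; apply: ord_inj; label_arith
  | by left; split => //; apply: ord_inj; label_arith
  | by right; label_arith
  | by exfalso; label_arith
  | match goal with H : ~~ ?b = ?b |- _ => by case: b H end ].

(* Two faces sharing an edge see it with labels differing by 2 or 3 (mod 5),
   unless they are the same face and label.  The weaker form with equal labels
   is not an inductive invariant. *)
Lemma shared_edge_labels n (f g : FT n) (i k : 'I_5) :
  (lfe (str n) f i).1 = (lfe (str n) g k).1 -> (f = g /\ i = k) \/ 2 <= off5 k i <= 3.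
Proof.
elim: n f g i k => [|m IH]; first by move=> [] [] i k /= ->; left.
move=> [f [i0|]] [g [k0|]] i k; rewrite ?lfe_petal ?lfe_central.
all: (try case Hi: (off5 i i0) => [|[|[|[|?]]]]);
     (try case Hk: (off5 k k0) => [|[|[|[|?]]]]);
     cell_eq; try solve_labels.
all: match goal with H : (lfe _ _ _).1 = (lfe _ _ _).1 |- _ =>
       case: (IH _ _ _ _ H) => [[? ?]|?]; subst; solve_labels end.
Qed.

Lemma lfe_face_inj n (f g : FT n) j : (lfe (str n) f j).1 = (lfe (str n) g j).1 -> f = g.
Proof. by case/shared_edge_labels => [[]//|]; rewrite /off5 addKn modnn. Qed.

Lemma lcor_face_inj n (f g : FT n) j : lcor (str n) f j = lcor (str n) g j -> f = g.
Proof.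
elim: n f g => [|m IH]; first by move=> [] [].
move=> [f [i0|]] [g [k0|]]; rewrite ?lcor_petal ?lcor_central.
all: (try case Hi: (off5 j i0) => [|[|[|[|?]]]]);
     (try case Hk: (off5 j k0) => [|[|[|[|?]]]]);
     cell_eq; try solve_labels.
all: match goal with
  | H : lcor _ _ _ = lcor _ _ _ |- _ =>
      have Ei : i0 = j by apply: ord_inj; label_arith
  | H : (lfe _ _ _).1 = _ |- _ =>
      case: (shared_edge_labels H) => [[? ?]|?]; subst; solve_labels
  end.
have Ek : k0 = j by apply: ord_inj; label_arith.
by subst; rewrite (IH _ _ H).
Qed.

Lemma eFs_inj n : injective (@eFs n).
Proof.
elim: n => [|m IH]; first by move=> [] [].
by move=> [f o] [f' o'] [/IH -> ->].
Qed.

Lemma eEs_inj n : injective (@eEs n).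
Proof.
elim: n => [|m IH]; first by move=> i i' [] E; apply/ord_pred_inj/val_inj.
move=> [[[e b]|[f i]]|[f i]] [[[e' b']|[f' i']]|[f' i']] //= [].
- by move=> /IH -> ->.
- by move=> /eFs_inj -> ->.
- by move=> /eFs_inj -> ->.
Qed.

Lemma eVs_inj n : injective (@eVs n).
Proof.
elim: n => [|m IH]; first by move=> i i' [] E; apply/ord_pred_inj/val_inj.
move=> [[v|e]|[f i]] [[v'|e']|[f' i']] //= [].
- by move=> /IH ->.
- by move=> /eEs_inj ->.
- by move=> /eFs_inj -> ->.
Qed.

Lemma lfe_eFs n (x : FT n) j :
  lfe (str n.+1) (eFs x) j = (eEs (lfe (str n) x j).1, (lfe (str n) x j).2).
Proof.
elim: n x j => [|m IH] x j; first by case: x.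
case: x => f [i|] //.
have IHi := IH f i; have IHp := IH f (ord_pred i).
rewrite /= in IHi IHp *; rewrite IHi IHp.
case: (lfe (str m) f i) => e1 o1; case: (lfe (str m) f (ord_pred i)) => e0 o0.
by case: (off5 j i) => [|[|[|[|?]]]]; case: o1; case: o0.
Qed.

Lemma lcor_eFs n (x : FT n) j : lcor (str n.+1) (eFs x) j = eVs (lcor (str n) x j).
Proof.
elim: n x j => [|m IH] x j; first by case: x.
case: x => f [i|] //.
have IHi := IH f i; have Ei := lfe_eFs f i; have Ep := lfe_eFs f (ord_pred i).
rewrite /= in IHi Ei Ep *; rewrite IHi Ei Ep.
by case: (off5 j i) => [|[|[|[|?]]]].
Qed.

Lemma Kcorner_inj j : injective (Kcorner ^~ j).
Proof.
move=> [[k x] Hx] [[l y] Hy] /(congr1 sval) /= E; apply: val_inj => /=.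
rewrite -(norm_canonical Hx) -(norm_canonical Hy).
have lcor_inj n : injective (fun x : FT n => lcor (str n) x j) by move=> ? ? /lcor_face_inj.
exact: (norm_map_inj eFs_inj eVs_inj lcor_inj (fun n x => lcor_eFs x j) E).
Qed.

Lemma Kfedge_inj j : injective (Kfedge ^~ j).
Proof.
move=> [[k x] Hx] [[l y] Hy] /(congr1 sval) /= E; apply: val_inj => /=.
rewrite -(norm_canonical Hx) -(norm_canonical Hy).
have lfe_inj n : injective (fun x : FT n => (lfe (str n) x j).1) by move=> ? ? /lfe_face_inj.
have lfe_emb n (z : FT n) : (lfe (str n.+1) (eFs z) j).1 = eEs (lfe (str n) z j).1.
  by rewrite lfe_eFs.
exact: (norm_map_inj eFs_inj eEs_inj lfe_inj lfe_emb E).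
Qed.

Lemma cell_iso_fix_faces (v : Kvert) (P Q : cx) (phi : cmap) :
  subcomplex P -> chain_connected P -> cV P v ->
  cell_iso P Q phi -> mV phi v = v ->
  forall f, cF P f -> mF phi f = f.
Proof.
move=> [_ [_ [coverV _]]] ccP Pv iso phi_v.
have [_ [_ [_ [_ [_ [_ [_ [_ [_ [_ phi_cells]]]]]]]]]] := iso.
have [f0 [j0 [Pf0 f0v]]] := coverV v Pv.
have phi_f0 : mF phi f0 = f0.
  by apply: (@Kcorner_inj j0); rewrite -(proj1 (phi_cells f0 Pf0 j0)) f0v.
move=> g Pg; elim: (ccP f0 g Pf0 Pg) phi_f0
  => [f h [Pf [Ph [i [k Efh]]]] phi_f | // | f g' h _ IH1 _ IH2].
- apply: (@Kfedge_inj k).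
  by rewrite -(proj2 (phi_cells h Ph k)) -Efh (proj2 (phi_cells f Pf i)) phi_f.
- by move/IH1/IH2.
Qed.

Lemma subcomplex_eq_faces (P Q : cx) :
  subcomplex P -> subcomplex Q -> (forall f, cF P f <-> cF Q f) ->
  (forall x, cV P x <-> cV Q x) /\ (forall e, cE P e <-> cE Q e).
Proof.
move=> [_ [bdP [coverVP coverEP]]] [_ [bdQ [coverVQ coverEQ]]] PQ.
split=> c; split=> Hc.
- by have [f [j [Pf <-]]] := coverVP c Hc; apply: (bdQ f (proj1 (PQ f) Pf) j).1.
- by have [f [j [Qf <-]]] := coverVQ c Hc; apply: (bdP f (proj2 (PQ f) Qf) j).1.
- by have [f [j [Pf <-]]] := coverEP c Hc; apply: (bdQ f (proj1 (PQ f) Pf) j).2.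
- by have [f [j [Qf <-]]] := coverEQ c Hc; apply: (bdP f (proj2 (PQ f) Qf) j).2.
Qed.

Theorem propositionp (v : Kvert) (P Q : cx) (phi : cmap) :
  subcomplex P -> subcomplex Q ->
  finite_cx P -> finite_cx Q ->
  chain_connected P -> chain_connected Q ->
  cV P v -> cV Q v ->
  cell_iso P Q phi -> mV phi v = v ->
  (forall x, cV P x <-> cV Q x) /\
  (forall e, cE P e <-> cE Q e) /\
  (forall f, cF P f <-> cF Q f).
Proof.
move=> subP subQ _ _ ccP _ Pv _ iso phi_v.
have fixP := cell_iso_fix_faces subP ccP Pv iso phi_v.
have [_ [_ [phiF [_ [_ [_ [_ [_ [ontoF _]]]]]]]]] := iso.
have PQ f : cF P f <-> cF Q f.
  split=> [Pf | /ontoF [g [Pg <-]]]; last by rewrite fixP.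
  by rewrite -(fixP f Pf); apply: phiF.
have [PQv PQe] := subcomplex_eq_faces subP subQ PQ.
by split; [|split].
Qed.
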